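(* Let $m>1$ be an integer and $k$ an odd positive integer. Then $\mathrm{msum}(mk,k)\ge 1-\frac1m$.
   Context: For positive integers $n>k$, let $S_n$ be the set of permutations $\pi=(\pi_1,\dots,\pi_n)$ of $1,\dots,n$, with cyclic indexing $\pi_{n+i}=\pi_i$, and $s_i=\sum_{j=0}^{k-1}\pi_{i+j}$ for $i=1,\dots,n$. Define $\mathrm{msum}(\pi,k)=\max_{1\le i\le n}s_i-\frac{k(n+1)}{2}$ and $\mathrm{msum}(n,k)=\min_{\pi\in S_n}\mathrm{msum}(\pi,k)$. *)

From HB Require Import structures.
From mathcomp Require Import all_boot all_order all_fingroup all_algebra.
Set Implicit Arguments. Unset Strict Implicit. Unset Printing Implicit Defensive.
Import Order.TTheory GRing.Theory Num.Theory.
Local Open Scope ring_scope.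

(* A permutation pi of 1..n is represented by p : 'S_n (a permutation of
   {0,..,n-1}), with pi_{i+1} = p i + 1 (positions and values shifted by 1).
   Cyclic indexing: position (i + j) mod n. *)

Definition wsum (n : nat) (p : 'S_n) (k : nat) (i : nat) : nat :=
  (\sum_(j < k) (match (insub ((i + j) %% n) : option 'I_n) with
                | Some x => (p x : nat).+1
                | None => 0
                end))%N.

(* msum(pi,k) = max_i s_i - k(n+1)/2  (as a rational); the nat max has
   default 0, which is harmless since all s_i >= 0 and n > 0 in use. *)
Definition msum_perm (n : nat) (p : 'S_n) (k : nat) : rat :=
  ((\max_(i < n) wsum p k i)%N)%:R - (k * (n + 1))%:R / 2%:R.

(* msum(n,k) = min over all permutations; the identity permutation (a member
   of the range) serves as initial value of the fold, so this is the true min. *)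
Definition msum (n k : nat) : rat :=
  \big[Order.min/msum_perm (1 : 'S_n) k]_(p : 'S_n) msum_perm p k.

From mathcomp Require Import all_boot all_order all_fingroup all_algebra.
From mathcomp Require Import zify lra.
Set Implicit Arguments. Unset Strict Implicit. Unset Printing Implicit Defensive.
Import Order.TTheory GRing.Theory Num.Theory.

(* Averaging: the n window sums s_i add up to k n(n+1)/2, and consecutive
   ones differ because s_(i+1) - s_i = pi_(i+k) - pi_i with k not a multiple
   of n.  Hence, with M = max s_i, each s_i + s_(i+1) is at most 2M - 1, and
   summing over i gives 2M >= k(n+1) + 1, i.e. msum >= 1/2.  If equality
   held, every pair sum would equal 2M - 1, so s_(i+2) = s_i, i.e.
   pi_i + pi_(i+1) is invariant under a shift by k; as k is odd this forces
   pi_0 = pi_(2k), impossible when 2k < n, i.e. when m >= 3.  Then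
   2M >= k(n+1) + 2 and msum >= 1. *)

Lemma sum_periodic_shift (g : nat -> nat) (n j : nat) :
  (forall x, g (x + n) = g x) -> \sum_(i < n) g (i + j) = \sum_(i < n) g i.
Proof.
move=> gP; elim: j => [|j IHj]; first by apply: eq_bigr => i _; rewrite addn0.
rewrite -{}IHj; apply: (@addIn (g j)).
transitivity (\sum_(i < n.+1) g (i + j)).
  by rewrite big_ord_recl addnC; congr (_ + _); apply: eq_bigr => i _; rewrite addnS.
by rewrite big_ord_recr -(gP j) [j + n]addnC.
Qed.

Lemma periodic_modn (g : nat -> nat) (n : nat) :
  (forall x, g (x + n) = g x) -> forall x, g (x %% n) = g x.
Proof.
move=> gP x; rewrite [in RHS](divn_eq x n); elim: (x %/ n) => [|q IHq].
  by rewrite mul0n add0n.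
by rewrite mulSnr addnAC gP.
Qed.

Lemma adjacent_sum_shift_odd (g : nat -> nat) (k : nat) : odd k ->
  (forall x, g x + g x.+1 = g (x + k) + g (x + k).+1) -> g 0 = g (k + k).
Proof.
move=> k_odd gk.
have gk' x : g x + g x.+1 = g (k + x) + g (k + x.+1) by rewrite gk [x + k]addnC addnS.
have pairs t : g 0 + g t.*2.+1 = g k + g (k + t.*2.+1).
  elim: t => [|t IHt]; first by have := gk' 0; rewrite addn0 double0.
  by have := gk' t.*2.+1; have := gk' t.*2.+2; rewrite doubleS; lia.
have half_k : k./2.*2.+1 = k by rewrite -[RHS]odd_double_half k_odd.
by have := pairs k./2; rewrite half_k; lia.
Qed.

Lemma sum_succ_double (n : nat) : (\sum_(i < n) i.+1).*2 = n * n.+1.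
Proof. by elim: n => [|n IHn]; rewrite ?big_ord0 // big_ord_recr /= doubleD IHn; lia. Qed.

Section WindowSums.

Variables (f : nat -> nat) (k : nat).

Definition window_sum (x : nat) : nat := \sum_(j < k) f (x + j).

Lemma window_sumS x : window_sum x.+1 + f x = window_sum x + f (x + k).
Proof.
rewrite /window_sum; case: k => [|k']; first by rewrite !big_ord0 addn0.
rewrite big_ord_recr big_ord_recl /= addn0 addSnnS.
have -> : \sum_(j < k') f (x.+1 + j) = \sum_(j < k') f (x + bump 0 j).
  by apply: eq_bigr => j _; rewrite addSnnS.
by rewrite [LHS]addnC addnA.
Qed.

Lemma window_sumSS x : window_sum x.+2 = window_sum x ->
  f x + f x.+1 = f (x + k) + f (x + k).+1.
Proof. by have := window_sumS x; have := window_sumS x.+1; rewrite addSn; lia. Qed.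

Variable n : nat.
Hypothesis f_periodic : forall x, f (x + n) = f x.

Lemma window_sum_periodic x : window_sum (x + n) = window_sum x.
Proof. by apply: eq_bigr => j _; rewrite addnAC f_periodic. Qed.

Lemma sum_window_sum : \sum_(i < n) window_sum i = k * \sum_(i < n) f i.
Proof.
rewrite exchange_big /= -[k in RHS]card_ord -sum_nat_const.
by apply: eq_bigr => j _; apply: sum_periodic_shift.
Qed.

Lemma sum_window_sum_pairs :
  \sum_(i < n) (window_sum i + window_sum i.+1) = (k * \sum_(i < n) f i).*2.
Proof.
rewrite big_split /= -addnn -sum_window_sum; congr (_ + _).
by under eq_bigr do rewrite -addn1; apply: sum_periodic_shift window_sum_periodic.
Qed.

Hypothesis f_inj_mod : forall x y, f x = f y -> x = y %[mod n].

Lemma window_sum_neq x : k != 0 %[mod n] -> window_sum x != window_sum x.+1.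
Proof.
apply: contraNN => /eqP eq_s; have := window_sumS x; rewrite -eq_s => /addnI.
by move/f_inj_mod/esym/eqP; rewrite -[x in _ == x %[mod n]]addn0 eqn_modDl.
Qed.

End WindowSums.

Section PermutationWindows.

Variables (n k : nat) (p : 'S_n).
Hypotheses (k_gt0 : 0 < k) (k_lt_n : k < n).

(* [wsum p k] is convertibly [window_sum cyclic_val k]. *)
Definition cyclic_val (x : nat) : nat :=
  if insub (x %% n) : option 'I_n is Some y then (p y).+1 else 0.

Let f := cyclic_val.
Let s := window_sum f k.
Let M := \max_(i < n) s i.

Lemma n_gt0 : 0 < n. Proof. exact: ltn_trans k_gt0 k_lt_n. Qed.

Lemma cyclic_val_periodic x : f (x + n) = f x.
Proof. by rewrite /f /cyclic_val modnDr. Qed.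

Lemma cyclic_valE (i : 'I_n) : f i = (p i).+1.
Proof. by rewrite /f /cyclic_val modn_small // valK. Qed.

Lemma cyclic_val_modE x : f x = (p (Ordinal (ltn_pmod x n_gt0))).+1.
Proof. by rewrite /f /cyclic_val -[x %% n]/(val (Ordinal (ltn_pmod x n_gt0))) valK. Qed.

Lemma cyclic_val_inj_mod x y : f x = f y -> x = y %[mod n].
Proof. by rewrite !cyclic_val_modE => /succn_inj/val_inj/perm_inj/(congr1 val). Qed.

Lemma sum_cyclic_val : (\sum_(i < n) f i).*2 = n * n.+1.
Proof.
rewrite -sum_succ_double [in RHS](reindex_inj (@perm_inj _ p)).
by congr _.*2; apply: eq_bigr => i _; apply: cyclic_valE.
Qed.

Lemma sum_window_pairs : \sum_(i < n) (s i + s i.+1).+1 = n * (k * n.+1).+1.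
Proof.
under eq_bigr do rewrite -addn1.
rewrite big_split /= (sum_window_sum_pairs k cyclic_val_periodic).
by rewrite sum_nat_const card_ord doubleMr sum_cyclic_val; lia.
Qed.

Lemma window_pair_lt i : (s i + s i.+1).+1 <= M.*2.
Proof.
have le_M j : s j <= M.
  rewrite /s -(periodic_modn (window_sum_periodic k cyclic_val_periodic)).
  exact: (@leq_bigmax _ (fun j : 'I_n => s j) (Ordinal (ltn_pmod j n_gt0))).
have neq_s : s i != s i.+1.
  by apply: window_sum_neq cyclic_val_inj_mod i _; rewrite mod0n modn_small // -lt0n.
by have := le_M i; have := le_M i.+1; lia.
Qed.

Lemma window_max_lower : (k * n.+1).+1 <= M.*2.
Proof.
rewrite -(leq_pmul2l n_gt0) -sum_window_pairs -[n in n * _]card_ord -sum_nat_const.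
by apply: leq_sum => i _; apply: window_pair_lt.
Qed.

Lemma window_sum_2periodic_of_tight : (k * n.+1).+1 = M.*2 -> forall x, s x.+2 = s x.
Proof.
move=> tight.
have pair_eq (i : 'I_n) : (s i + s i.+1).+1 = M.*2.
  have [_] := @leqif_sum 'I_n predT _ _ (fun=> M.*2) (fun j _ => leqif_eq (window_pair_lt j)).
  rewrite /= sum_window_pairs sum_nat_const card_ord tight eqxx.
  by move=> /esym/forallP/(_ i)/eqP.
have pair_all x : (s x + s x.+1).+1 = M.*2.
  pose g y := (s y + s y.+1).+1.
  have gP y : g (y + n) = g y.
    by rewrite /g /s -[(y + n).+1]addSn !(window_sum_periodic k cyclic_val_periodic).
  by rewrite -[LHS]/(g x) -(periodic_modn gP); apply: (pair_eq (Ordinal (ltn_pmod x n_gt0))).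
by move=> x; have := pair_all x; have := pair_all x.+1; lia.
Qed.

Lemma window_max_lower_odd : odd k -> k.*2 < n -> (k * n.+1).+2 <= M.*2.
Proof.
move=> k_odd k2_lt_n; rewrite ltn_neqAle window_max_lower andbT.
apply/eqP => /window_sum_2periodic_of_tight s2P.
have /cyclic_val_inj_mod := adjacent_sum_shift_odd k_odd (fun x => window_sumSS (s2P x)).
by rewrite addnn mod0n modn_small //; case: k k_gt0.
Qed.

Local Open Scope ring_scope.

Lemma msum_permE : msum_perm p k = M%:R - (k * n.+1)%:R / 2.
Proof. by rewrite /msum_perm addn1. Qed.

Lemma msum_perm_ge_half : 2^-1 <= msum_perm p k.
Proof.
have := window_max_lower; rewrite -(ler_nat rat) -muln2 natrM -natr1 msum_permE.
lra.
Qed.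

Lemma msum_perm_ge1 : odd k -> (k.*2 < n)%N -> 1 <= msum_perm p k.
Proof.
move=> k_odd k2_lt_n; have := window_max_lower_odd k_odd k2_lt_n.
rewrite -(ler_nat rat) -muln2 natrM -!natr1 msum_permE.
lra.
Qed.

End PermutationWindows.

Local Open Scope ring_scope.

Lemma msum_ge (n k : nat) (x : rat) :
  (forall p : 'S_n, x <= msum_perm p k) -> x <= msum n k.
Proof. by move=> ge_x; rewrite /msum; elim/big_ind: _ => // a b; rewrite le_min => -> ->. Qed.

Theorem lemma5p2 (m k : nat) (hm : (1 < m)%N) (hk : odd k) :
  1 - (m%:R)^-1 <= msum (m * k) k :> rat.
Proof.
have k_gt0 : (0 < k)%N by case: k hk.
have k_lt_n : (k < m * k)%N by rewrite ltn_Pmull.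
apply: msum_ge => p.
have [m2 | m_ne2] := eqVneq m 2.
  have -> : m%:R = 2 :> rat by rewrite m2.
  by have := msum_perm_ge_half p k_gt0 k_lt_n; lra.
have k2_lt_n : (k.*2 < m * k)%N by rewrite -mul2n ltn_pmul2r //; lia.
have := msum_perm_ge1 p k_gt0 k_lt_n hk k2_lt_n.
have : 0 < m%:R^-1 :> rat by rewrite invr_gt0 ltr0n; lia.
lra.
Qed.
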